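(* Let $n\ge1$. A valid configuration in $\Omega'_n$ contains neither of the junction tiles $j_n^{0,0,1,1}$ and $j_n^{1,1,0,0}$.
   Context: $V_n=\{(v_0,v_1,v_2)\in\mathbb{Z}^3: 0\le v_0\le v_1\le 1,\ v_1\le v_2\le n+1\}$, elements written as words $v_0v_1v_2$. A Wang tile is $t=(a,b,c,d)$ with $\mathrm{RIGHT}(t)=a$, $\mathrm{TOP}(t)=b$, $\mathrm{LEFT}(t)=c$, $\mathrm{BOTTOM}(t)=d$; $\hat t=(b,a,d,c)$, $\hat S=\{\hat t:t\in S\}$. Define (as (right, top, left, bottom)): $W_n=\{(11(i+1),11(j+1),11i,11j):1\le i,j\le n\}$; $B'_n=\{(00(i+1),111,00i,11n):0\le i\le n\}$; $G_n=\{(01(i+1),111,00i,11(n+1)):0\le i\le n\}$; $Y_n=\{(01(i+1),112,01i,11(n+1)):1\le i\le n\}$; $A_n=\{(00(i+1),112,01i,11n):1\le i\le n\}$; $j_n^{k,l,r,s}=((0,k,l),(0,r,s),(0,s,r+n),(0,l,k+n))$ for $(k,l),(r,s)\in\{(0,0),(0,1),(1,1)\}$ (so $j_n^{0,0,1,1}=(000,011,01(n+1),00n)$ and $j_n^{1,1,0,0}=(011,000,00n,01(n+1))$); $J'_n$ is the set of these 9 tiles. $\mathcal T'_n=W_n\cup B'_n\cup G_n\cup Y_n\cup A_n\cup\hat B'_n\cup\hat G_n\cup\hat Y_n\cup\hat A_n\cup J'_n$. $\Omega'_n$ is the set of configurations $c:\mathbb Z^2\to\mathcal T'_n$ with $\mathrm{RIGHT}(c(\mathbf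 m))=\mathrm{LEFT}(c(\mathbf m+\mathbf e_1))$ and $\mathrm{TOP}(c(\mathbf m))=\mathrm{BOTTOM}(c(\mathbf m+\mathbf e_2))$ for all $\mathbf m$. *)

From Stdlib Require Import ZArith Arith.

(* Labels v0 v1 v2 written as words; V_n membership. *)
Definition label := (nat * nat * nat)%type.
Definition V (n : nat) (v : label) : Prop :=
  let '(v0, v1, v2) := v in v0 <= v1 <= 1 /\ v1 <= v2 <= n + 1.

(* Wang tile t = (a,b,c,d) = (RIGHT, TOP, LEFT, BOTTOM). *)
Record tile := mkTile { RIGHT : label; TOP : label; LEFT : label; BOTTOM : label }.

Definition hat (t : tile) : tile := mkTile (TOP t) (RIGHT t) (BOTTOM t) (LEFT t).
Definition hatS (S : tile -> Prop) (t : tile) : Prop := exists t', S t' /\ t = hat t'.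

Definition W (n : nat) (t : tile) : Prop := exists i j, 1 <= i <= n /\ 1 <= j <= n /\
  t = mkTile (1,1,i+1) (1,1,j+1) (1,1,i) (1,1,j).
Definition B' (n : nat) (t : tile) : Prop := exists i, 0 <= i <= n /\
  t = mkTile (0,0,i+1) (1,1,1) (0,0,i) (1,1,n).
Definition G (n : nat) (t : tile) : Prop := exists i, 0 <= i <= n /\
  t = mkTile (0,1,i+1) (1,1,1) (0,0,i) (1,1,n+1).
Definition Y (n : nat) (t : tile) : Prop := exists i, 1 <= i <= n /\
  t = mkTile (0,1,i+1) (1,1,2) (0,1,i) (1,1,n+1).
Definition A (n : nat) (t : tile) : Prop := exists i, 1 <= i <= n /\
  t = mkTile (0,0,i+1) (1,1,2) (0,1,i) (1,1,n).

Definition jt (n k l r s : nat) : tile :=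
  mkTile (0,k,l) (0,r,s) (0,s,r+n) (0,l,k+n).
Definition kl_ok (k l : nat) : Prop :=
  (k, l) = (0, 0) \/ (k, l) = (0, 1) \/ (k, l) = (1, 1).
Definition J' (n : nat) (t : tile) : Prop :=
  exists k l r s, kl_ok k l /\ kl_ok r s /\ t = jt n k l r s.

Definition T' (n : nat) (t : tile) : Prop :=
  W n t \/ B' n t \/ G n t \/ Y n t \/ A n t \/
  hatS (B' n) t \/ hatS (G n) t \/ hatS (Y n) t \/ hatS (A n) t \/ J' n t.

Definition Omega' (n : nat) (c : Z * Z -> tile) : Prop :=
  forall m1 m2 : Z,
    T' n (c (m1, m2)) /\
    RIGHT (c (m1, m2)) = LEFT (c ((m1 + 1)%Z, m2)) /\
    TOP (c (m1, m2)) = BOTTOM (c (m1, (m2 + 1)%Z)).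

From Stdlib Require Import ZArith Lia.

(* To the right of the junction j^{0,0,1,1} the row continues with tiles of
   B', G, Y, A whose left labels 0bk count k = 0, 1, ... and whose tops are
   11(b+1).  In the row above, from the same column on, this forces W tiles
   with left labels 11(k+2); but W tiles only have left labels 11k with
   k <= n, so this breaks down at k = n - 1.  When n = 1 the tile above the
   junction may itself be a junction tile; then the row above is pushed to
   the left label 00(n+1), which no tile has.  The other junction tile is the
   hat of the first, and hat combined with swapping coordinates preserves
   valid configurations. *)

Ltac destruct_tile H :=
  unfold T', W, B', G, Y, A, hatS, J', kl_ok, jt in H;
  repeat match goal with
  | H : exists _, _ |- _ => destruct H
  | H : _ /\ _ |- _ => destruct H
  | H : _ \/ _ |- _ => destruct H
  | H : (_, _) = (_, _) |- _ => injection H; clear H; intros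
  | H : ?x = _ |- _ => is_var x; subst x; simpl in *
  end.

Lemma T'_left_0_lt n t b k :
  T' n t -> LEFT t = (0, b, k) -> k < n ->
  TOP t = (1, 1, b + 1) /\ exists b', RIGHT t = (0, b', k + 1).
Proof.
  intros Ht Hl Hk; destruct_tile Ht; try lia;
    split; try eexists; f_equal; lia.
Qed.

Lemma T'_left_1 n t k j :
  T' n t -> LEFT t = (1, 1, k) -> BOTTOM t = (1, 1, j) ->
  k <= n /\ RIGHT t = (1, 1, k + 1).
Proof.
  intros Ht Hl Hb; destruct_tile Ht; try lia; split; try f_equal; lia.
Qed.

Lemma T'_bottom_011 n t :
  1 <= n -> T' n t -> BOTTOM t = (0, 1, 1) ->
  RIGHT t = (1, 1, 2) \/ (n = 1 /\ RIGHT t = (0, 0, 1)).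
Proof.
  intros hn Ht Hb; destruct_tile Ht; try lia;
    solve [left; f_equal; lia | right; split; [lia | f_equal; lia]].
Qed.

Lemma T'_left_00n n t :
  T' n t -> LEFT t = (0, 0, n) -> BOTTOM t = (1, 1, n) -> RIGHT t = (0, 0, n + 1).
Proof. intros Ht Hl Hb; destruct_tile Ht; try lia; f_equal; lia. Qed.

Lemma T'_left_00Sn n t : T' n t -> LEFT t <> (0, 0, n + 1).
Proof. intros Ht Hl; destruct_tile Ht; lia. Qed.

Lemma hat_hat t : hat (hat t) = t.
Proof. now destruct t. Qed.

Lemma hat_jt n k l r s : hat (jt n k l r s) = jt n r s k l.
Proof. reflexivity. Qed.

Lemma hatS_hat (S : tile -> Prop) t : S t -> hatS S (hat t).
Proof. now exists t. Qed.

Lemma hat_hatS (S : tile -> Prop) t : hatS S t -> S (hat t).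
Proof. intros [t' [Ht ->]]; now rewrite hat_hat. Qed.

Lemma W_hat n t : W n t -> W n (hat t).
Proof. intros (i & j & Hi & Hj & ->); now exists j, i. Qed.

Lemma J'_hat n t : J' n t -> J' n (hat t).
Proof. intros (k & l & r & s & Hkl & Hrs & ->); now exists r, s, k, l. Qed.

Lemma T'_hat n t : T' n t -> T' n (hat t).
Proof.
  unfold T'; intros [H|[H|[H|[H|[H|[H|[H|[H|[H|H]]]]]]]]].
  - left; now apply W_hat.
  - do 5 right; left; now apply hatS_hat.
  - do 6 right; left; now apply hatS_hat.
  - do 7 right; left; now apply hatS_hat.
  - do 8 right; left; now apply hatS_hat.
  - do 1 right; left; now apply hat_hatS.
  - do 2 right; left; now apply hat_hatS.
  - do 3 right; left; now apply hat_hatS.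
  - do 4 right; left; now apply hat_hatS.
  - do 9 right; now apply J'_hat.
Qed.

Lemma Omega'_transpose n c :
  Omega' n c -> Omega' n (fun m => hat (c (snd m, fst m))).
Proof.
  intros hc m1 m2; simpl.
  destruct (hc m2 m1) as (Ht & Hr & Hu).
  split; [now apply T'_hat | now split].
Qed.

Section Valid.

Variables (n : nat) (c : Z * Z -> tile).
Hypothesis hc : Omega' n c.

Lemma ladder_step x y b k :
  LEFT (c (x, y)) = (0, b, k) -> k < n ->
  LEFT (c (x, (y + 1)%Z)) = (1, 1, k + 2) ->
  k + 2 <= n /\ exists b',
    LEFT (c ((x + 1)%Z, y)) = (0, b', k + 1) /\
    LEFT (c ((x + 1)%Z, (y + 1)%Z)) = (1, 1, k + 3).
Proof.
  intros Hl Hk Hl'.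
  destruct (hc x y) as (Ht & Hr & Hu).
  destruct (hc x (y + 1)%Z) as (Ht' & Hr' & _).
  destruct (T'_left_0_lt _ _ _ _ Ht Hl Hk) as [Htop [b' Hright]].
  rewrite Hu in Htop.
  destruct (T'_left_1 _ _ _ _ Ht' Hl' Htop) as [Hkn Hright'].
  split; [lia |].
  exists b'; rewrite <- Hr, <- Hr', Hright, Hright'; split; f_equal; lia.
Qed.

Lemma no_ladder x y b k :
  LEFT (c (x, y)) = (0, b, k) -> k < n ->
  LEFT (c (x, (y + 1)%Z)) = (1, 1, k + 2) -> False.
Proof.
  remember (n - k) as d eqn:Hd.
  revert x b k Hd; induction d as [| d IH]; intros x b k Hd Hl Hk Hl'; [lia |].
  destruct (ladder_step _ _ _ _ Hl Hk Hl') as [Hkn [b' [Hl1 Hl1']]].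
  apply (IH (x + 1)%Z b' (k + 1)); [lia | exact Hl1 | lia |].
  now replace (k + 1 + 2) with (k + 3) by lia.
Qed.

Lemma Omega'_no_jt0011 (hn : 1 <= n) m1 m2 : c (m1, m2) <> jt n 0 0 1 1.
Proof.
  intro Hj.
  destruct (hc m1 m2) as (_ & Hr & Hu).
  destruct (hc (m1 + 1)%Z m2) as (Ht10 & _ & Hu10).
  destruct (hc m1 (m2 + 1)%Z) as (Ht01 & Hr01 & _).
  destruct (hc (m1 + 1)%Z (m2 + 1)%Z) as (Ht11 & Hr11 & _).
  rewrite Hj in Hr, Hu; simpl in Hr, Hu.
  destruct (T'_left_0_lt _ _ _ _ Ht10 (eq_sym Hr) hn) as [Htop10 _].
  destruct (T'_bottom_011 _ _ hn Ht01 (eq_sym Hu)) as [Hright01 | [-> Hright01]];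
    rewrite Hr01 in Hright01.
  - exact (no_ladder _ _ _ _ (eq_sym Hr) hn Hright01).
  - rewrite Hu10 in Htop10.
    pose proof (T'_left_00n _ _ Ht11 Hright01 Htop10) as Hright11.
    rewrite Hr11 in Hright11.
    destruct (hc (m1 + 1 + 1)%Z (m2 + 1)%Z) as (Ht21 & _).
    exact (T'_left_00Sn _ _ Ht21 Hright11).
Qed.

End Valid.

Theorem lemma7p3 (n : nat) (hn : 1 <= n) (c : Z * Z -> tile) (hc : Omega' n c) :
  forall m : Z * Z, c m <> jt n 0 0 1 1 /\ c m <> jt n 1 1 0 0.
Proof.
  intros [m1 m2]; split.
  - exact (Omega'_no_jt0011 n c hc hn m1 m2).
  - intro Hj.
    apply (Omega'_no_jt0011 n _ (Omega'_transpose n c hc) hn m2 m1); simpl.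
    now rewrite Hj, hat_jt.
Qed.
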